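(* Let $k \geq 3$, let $F$ be a $k$-edge graph with $\gamma(F) = 1$, let $G$ be a pure $(m,F)$-special graph (with a fixed representation), let $H$ and $I$ be two distinct $F$-constituents of $G$, and let $x \in V(H)$ and $y \in V(I)$. Then $G$ has a minimum $F$-isolating set $D$ with $x, y \in D$.
   Context: All graphs are finite and simple. For $D \subseteq V(G)$, $N_G[D]$ is the closed neighbourhood of $D$. A set $D \subseteq V(G)$ is an $F$-isolating set of $G$ if $G - N_G[D]$ contains no subgraph isomorphic to $F$; $\iota(G,F)$ is the minimum size of such a set, and a minimum $F$-isolating set is one of this size. $\gamma(F)=1$ means $F$ has a vertex adjacent to all other vertices of $F$. A pure $(m,F)$-special graph is a graph obtained as follows: $m+1 = q(k+2)$ for an integer $q\ge 1$; take a tree $T$ with $q$ vertices $v_1,\dots,v_q$, pairwise disjoint copies $F_1,\dots,F_q$ of $F$ disjoint from $V(T)$, and vertices $w_i\in V(F_i)$; the graph has vertex set $V(T)\cup\bigcup_i V(F_i)$ and edge set $E(T)\cup\bigcup_i (E(F_i)\cup\{v_iw_i\})$. $T$ is the quotient graph, and for each $i$ the subgraph $G_i$ with vertex set $\{v_i\}\cup V(F_i)$ and edge set $E(F_i)\cup\{v_iw_i\}$ is an $F$-constituent, with $F$-connection $v_i$. *)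

From mathcomp Require Import all_boot.
Set Implicit Arguments. Unset Strict Implicit. Unset Printing Implicit Defensive.

Definition simple_graph (T : finType) (e : rel T) : Prop :=
  symmetric e /\ irreflexive e.

Definition edge_set (T : finType) (e : rel T) : {set {set T}} :=
  [set [set p.1; p.2] | p in [set p : T * T | e p.1 p.2]].

Definition num_edges (T : finType) (e : rel T) : nat := #|edge_set e|.

Definition dom_number_one (T : finType) (e : rel T) : Prop :=
  exists c : T, forall v : T, v != c -> e c v.

Definition is_tree (T : finType) (e : rel T) : Prop :=
  [/\ simple_graph e, (forall x y : T, connect e x y) & num_edges e = #|T|.-1].

Definition closed_nbhd (T : finType) (e : rel T) (D : {set T}) : {set T} :=
  [set x | (x \in D) || [exists y in D, e y x]].

Definition has_F_copy (VF T : finType) (f : rel VF) (e : rel T) (A : {set T}) : Prop :=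
  exists g : VF -> T,
    [/\ injective g, (forall u, g u \in A) & (forall u v, f u v -> e (g u) (g v))].

Definition F_isolating (VF T : finType) (f : rel VF) (e : rel T) (D : {set T}) : Prop :=
  ~ has_F_copy f e (~: closed_nbhd e D).

Definition min_F_isolating (VF T : finType) (f : rel VF) (e : rel T) (D : {set T}) : Prop :=
  F_isolating f e D /\ (forall D' : {set T}, F_isolating f e D' -> #|D| <= #|D'|).

(* Pure (m,F)-special graph built from a tree t on 'I_q (vertices v_i = inl i),
   copies F_i of F (vertex u of F_i is inr (i,u)) and attachment vertices
   w_i = inr (i, w i). *)
Notation special_vertex q VF := ('I_q + ('I_q * VF))%type.

Definition special_rel (q : nat) (VF : finType) (f : rel VF) (t : rel 'I_q)
  (w : 'I_q -> VF) : rel (special_vertex q VF) :=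
  fun a b =>
    match a, b with
    | inl i, inl j => t i j
    | inl i, inr (j, v) => (i == j) && (v == w i)
    | inr (j, v), inl i => (i == j) && (v == w i)
    | inr (i, u), inr (j, v) => (i == j) && f u v
    end.

(* x is a vertex of the i-th F-constituent G_i (vertex set {v_i} u V(F_i)). *)
Definition in_constituent (q : nat) (VF : finType) (i : 'I_q)
  (x : special_vertex q VF) : bool :=
  match x with
  | inl j => j == i
  | inr (j, _) => j == i
  end.

From mathcomp Require Import all_boot.
Set Implicit Arguments. Unset Strict Implicit. Unset Printing Implicit Defensive.

(* Take D to contain one vertex of every F-constituent: x in H, y in I and the
   connection v_l in every other constituent.  Any F-isolating set must meet
   every constituent, since a copy F_l untouched by it survives in G - N[D],
   so |D| = q is minimum.  Conversely let F' be a copy of F in G - N[D] and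
   let c' be the image of a dominating vertex of F; F' lies in N[c'].  If c'
   is in some F_l, then F' lies in the constituent G_l, which has |V(F)| + 1
   vertices of which two are dominated by D.  Otherwise c' is v_i or v_j and
   its undominated neighbours are at most v_j (resp. v_i) and w_i, which are
   not adjacent, so F would be a star with at most two edges. *)

Lemma card_le_of_inj_into (T T' : finType) (g : T -> T') (A : {set T'}) :
  injective g -> (forall u, g u \in A) -> #|T| <= #|A|.
Proof.
move=> ginj gA; rewrite -cardsT -(card_imset _ ginj).
by apply: subset_leq_card; apply/subsetP => _ /imsetP [u _ ->].
Qed.

Lemma exists_nbr_of_dom (VF : finType) (f : rel VF) (c : VF) :
  simple_graph f -> 0 < num_edges f -> (forall v, v != c -> f c v) ->
  forall u, exists v, f u v.
Proof.
move=> [fsym firr]; rewrite /num_edges card_gt0 => /set0Pn [E].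
case/imsetP=> p; rewrite inE => fp _ fdom u.
case: (eqVneq u c) => [->|uc]; last by exists c; rewrite fsym fdom.
case: (eqVneq p.1 c) => [p1c|p1nc]; last by exists p.1; apply: fdom.
by exists p.2; rewrite -p1c.
Qed.

Lemma num_edges_star (VF : finType) (f : rel VF) (c : VF) :
  simple_graph f -> (forall u v, f u v -> u = c \/ v = c) ->
  num_edges f <= #|[set~ c]|.
Proof.
move=> [_ firr] fstar; rewrite /num_edges.
apply: leq_trans (leq_imset_card (fun v => [set c; v]) _).
apply: subset_leq_card; apply/subsetP => E /imsetP [[u v]].
rewrite inE /= => fuv ->.
have neq_uv : u != v by apply: contraTneq fuv => ->; rewrite firr.
apply/imsetP; case: (fstar _ _ fuv) => [uc|vc].
- by exists v; [rewrite !inE -uc eq_sym | rewrite uc].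
- by exists u; [rewrite !inE -vc | rewrite vc setUC].
Qed.

Lemma no_copy_star_into_pair (VF T : finType) (f : rel VF) (e : rel T)
    (g : VF -> T) (c : VF) (a b : T) :
  simple_graph f -> 3 <= num_edges f ->
  injective g -> (forall u v, f u v -> e (g u) (g v)) ->
  (forall v, v != c -> g v = a \/ g v = b) -> ~~ e a b -> ~~ e b a -> False.
Proof.
move=> [fsym firr] f3 ginj gE gab nab nba.
have small : #|[set~ c]| <= 2.
  rewrite -(card_imset _ ginj).
  apply: (leq_trans (subset_leq_card (_ : _ \subset [set a; b]))).
    apply/subsetP => z /imsetP [v]; rewrite !inE => vc ->.
    by case: (gab v vc) => ->; rewrite eqxx ?orbT.
  by rewrite cards2; case: (_ != _).
have star u v : f u v -> u = c \/ v = c.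
  move=> fuv; case: (eqVneq u c) => [->|uc]; [by left | right].
  apply/eqP; apply: contraT => vc.
  have neq_g : g u != g v.
    by rewrite (inj_eq ginj); apply: contraTneq fuv => ->; rewrite firr.
  move: neq_g (gE _ _ fuv).
  by case: (gab u uc) => ->; case: (gab v vc) => ->; rewrite ?eqxx ?(negbTE nab) ?(negbTE nba).
by have := leq_trans f3 (leq_trans (num_edges_star (conj fsym firr) star) small).
Qed.

Section PureSpecialGraph.

Variables (VF : finType) (f : rel VF) (q : nat) (t : rel 'I_q) (w : 'I_q -> VF).
Local Notation T := (special_vertex q VF).
Local Notation e := (special_rel f t w).

Definition constituent_index (z : T) : 'I_q :=
  match z with inl l => l | inr (l, _) => l end.

Definition constituent (l : 'I_q) : {set T} := [set z | constituent_index z == l].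

Lemma in_constituentE l z : in_constituent l z = (constituent_index z == l).
Proof. by case: z => [|[]]. Qed.

Lemma card_constituent l : #|constituent l| = #|VF|.+1.
Proof.
have -> : constituent l = inl l |: [set inr (l, u) | u : VF].
  apply/setP => -[m|[m u]]; rewrite !inE /=.
    apply/idP/idP => [/eqP ->|/orP [/eqP [->] | /imsetP [? _ //]]]; by rewrite ?eqxx.
  by apply/eqP/imsetP => [->|[v _ [->]] //]; exists u.
rewrite cardsU1 card_imset; last by move=> u v [].
by case: imsetP => // -[].
Qed.

Lemma constituent_index_nbrl l u z :
  e z (inr (l, u)) -> constituent_index z = l.
Proof. by case: z => [m|[m v]] /andP [/eqP ->]. Qed.

Lemma constituent_index_nbrr l u z :
  e (inr (l, u)) z -> constituent_index z = l.
Proof. by case: z => [m|[m v]] /andP [/eqP ->]. Qed.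

Lemma F_isolating_meets_constituent (D : {set T}) l :
  F_isolating f e D -> exists2 z, z \in D & constituent_index z = l.
Proof.
move=> Diso; case: (boolP [exists z in D, constituent_index z == l]).
  by case/exists_inP => z zD /eqP; exists z.
move/exists_inPn => Dl; case: Diso; exists (fun u => inr (l, u)); split.
- by move=> u v [].
- move=> u; rewrite !inE negb_or; apply/andP; split.
    by apply/negP => /Dl; rewrite eqxx.
  apply/exists_inPn => z zD.
  by apply: contraNN (Dl _ zD) => /constituent_index_nbrl/eqP.
- by move=> u v fuv /=; rewrite eqxx.
Qed.

Lemma F_isolating_card (D : {set T}) : F_isolating f e D -> q <= #|D|.
Proof.
move=> Diso; apply: leq_trans (leq_imset_card constituent_index D).
rewrite -{1}(card_ord q) -cardsT; apply: subset_leq_card; apply/subsetP => l _.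
by have [z zD <-] := F_isolating_meets_constituent l Diso; apply: imset_f.
Qed.

Variable c : VF.
Hypotheses (f_simple : simple_graph f) (f_dom : forall v, v != c -> f c v)
  (f_edges : 3 <= num_edges f).

Lemma exists_constituent_nbr z :
  exists z', [/\ z' != z, e z z' & constituent_index z' = constituent_index z].
Proof.
case: z => [l|[l u]]; first by exists (inr (l, w l)); rewrite /= !eqxx.
have [_ firr] := f_simple.
have [v fuv] := exists_nbr_of_dom f_simple (ltnW (ltnW f_edges)) f_dom u.
exists (inr (l, v)); split; rewrite /= ?eqxx //.
by apply: contraTneq fuv => -[->]; rewrite firr.
Qed.

Lemma copy_centered_in_constituent (g : VF -> T) l v0 :
  (forall u v, f u v -> e (g u) (g v)) -> g c = inr (l, v0) ->
  forall u, g u \in constituent l.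
Proof.
move=> gE gc u; rewrite inE; case: (eqVneq u c) => [->|uc]; first by rewrite gc.
by have := gE _ _ (f_dom uc); rewrite gc => /constituent_index_nbrr ->.
Qed.

Lemma no_copy_centered_in_constituent (R : {set T}) (g : VF -> T) l v0 z z' :
  injective g -> (forall u, g u \in R) -> (forall u v, f u v -> e (g u) (g v)) ->
  g c = inr (l, v0) -> z \in constituent l -> z' \in constituent l -> z' != z ->
  z \notin R -> z' \notin R -> False.
Proof.
move=> ginj gR gE gc zl z'l z'z zR z'R.
have : #|VF| <= #|constituent l :\ z :\ z'|.
  apply: card_le_of_inj_into ginj _ => u; rewrite !in_setD1.
  rewrite (copy_centered_in_constituent gE gc) andbT.
  by apply/andP; split; [apply: contraNneq z'R | apply: contraNneq zR] => <-.
have := cardsD1 z (constituent l).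
rewrite card_constituent zl (cardsD1 z') in_setD1 z'z z'l /= !add1n => -[->].
by rewrite ltnn.
Qed.

Lemma no_copy_centered_at_connection (R : {set T}) (g : VF -> T) l l' :
  l != l' -> (forall m, inl m \in R -> m = l \/ m = l') ->
  injective g -> (forall u, g u \in R) -> (forall u v, f u v -> e (g u) (g v)) ->
  g c = inl l -> False.
Proof.
move=> ll' Rl ginj gR gE gc.
have l'l : (l' == l) = false by rewrite eq_sym (negbTE ll').
apply: (no_copy_star_into_pair f_simple f_edges ginj gE
          (a := inl l') (b := inr (l, w l))); rewrite /= ?l'l //.
move=> v vc; have := gE _ _ (f_dom vc); rewrite gc.
case gv: (g v) => [m|[m u]] /=; last by case/andP => /eqP <- /eqP ->; right.
move=> _; left; move: (gR v); rewrite gv => /Rl [ml|-> //].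
by move: vc; rewrite -(inj_eq ginj) gv gc ml eqxx.
Qed.

Lemma transversal_F_isolating (D : {set T}) i j :
  i != j -> (forall l, exists2 z, z \in D & constituent_index z = l) ->
  (forall l, l != i -> l != j -> inl l \in D) -> F_isolating f e D.
Proof.
move=> ij Dmeets Dinl [g [ginj gR gE]].
set R := ~: closed_nbhd e D in gR.
have DR z : z \in D -> z \notin R by move=> zD; rewrite !inE zD.
have nbrR z z' : z \in D -> e z z' -> z' \notin R.
  by move=> zD zz'; rewrite !inE negbK; apply/orP; right; apply/exists_inP; exists z.
case gc: (g c) => [l|[l v0]].
- have Rl m : inl m \in R -> m = i \/ m = j.
    move=> mR; case: (eqVneq m i) => [->|mi]; [by left | right].
    by apply/eqP; apply: contraTT mR => mj; apply: DR; apply: Dinl.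
  have := gR c; rewrite gc => /Rl [li|lj]; subst l.
    exact: no_copy_centered_at_connection ij Rl ginj gR gE gc.
  have ji : j != i by rewrite eq_sym.
  apply: (no_copy_centered_at_connection ji _ ginj gR gE gc).
  by move=> m /Rl [] ->; [right | left].
- have [z zD zl] := Dmeets l.
  have [z' [z'z zz' z'l]] := exists_constituent_nbr z.
  apply: (no_copy_centered_in_constituent ginj gR gE gc _ _ z'z (DR _ zD) (nbrR _ _ zD zz'));
    by rewrite inE ?z'l zl.
Qed.

End PureSpecialGraph.

Theorem lemma3p5 (k : nat) (VF : finType) (f : rel VF)
  (q : nat) (t : rel 'I_q) (w : 'I_q -> VF) (i j : 'I_q)
  (x y : special_vertex q VF) :
  3 <= k -> simple_graph f -> num_edges f = k -> dom_number_one f ->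
  0 < q -> is_tree t -> i != j ->
  in_constituent i x -> in_constituent j y ->
  exists D : {set special_vertex q VF},
    [/\ min_F_isolating f (special_rel f t w) D, x \in D & y \in D].
Proof.
move=> k3 f_simple fk [c f_dom] _ _ ij; rewrite !in_constituentE => /eqP xi /eqP yj.
pose d l := if l == i then x else if l == j then y else inl l.
have d_index l : constituent_index (d l) = l.
  by rewrite /d; case: (eqVneq l i) => [-> //|_]; case: (eqVneq l j) => [-> //|].
exists [set d l | l : 'I_q].
have xD : x \in [set d l | l : 'I_q] by apply/imsetP; exists i; rewrite // /d eqxx.
have yD : y \in [set d l | l : 'I_q].
  by apply/imsetP; exists j; rewrite // /d eq_sym (negbTE ij) eqxx.
split=> //; split.
- apply: (transversal_F_isolating f_simple f_dom _ ij) => [|l|l li lj].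
  + by rewrite fk.
  + by exists (d l); rewrite ?imset_f.
  + by apply/imsetP; exists l; rewrite // /d (negbTE li) (negbTE lj).
- move=> D' /F_isolating_card; apply: leq_trans.
  by rewrite (leq_trans (leq_imset_card _ _)) // card_ord.
Qed.
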